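(* Let $\lambda_1,\lambda_2\ge0$ and let $\mathbf m\in\mathcal B(\lambda+\rho)_{res}$ be the head of its resonance family $RF(\mathbf m)$. If $RF(\mathbf m)\cap\mathcal B(\lambda+\rho)=\emptyset$, then $$RF(\mathbf m)=\{f_1^{t_1}f_2^{t_2}\mathbf m:\ 0\le t_1\le s_6+1,\ 0\le t_2\le\min\{s_2,s_5\}+1\},$$ where $s_2,s_5,s_6$ are the bounding data of $\mathbf m$ (and all these iterated lowerings are nonzero).
   Context: For $\mathbf m\in\mathbb Z_{\ge0}^6$ and integers $\lambda_1,\lambda_2\ge0$: $s_1=\lambda_2+m_5+m_6-m_1-m_2-m_3$, $s_2=\lambda_2+m_5+m_6-m_2-2m_3$, $s_3=\lambda_2+m_6-m_3-m_4$, $s_4=\lambda_2+m_6-m_4-m_5$, $s_5=\lambda_2-m_5$, $s_6=\lambda_1-m_6$. $\mathcal B(\lambda+\rho)$: all $s_j\ge-1$ and $2s_3-s_4\ge-1$. $\mathcal B(\lambda+\rho)_{res}$: $m_3=m_5$, $s_j\ge-1$ for $j\in\{1,2,5,6\}$, $s_3=s_4\le0$ even; decoration $d(\mathbf m)=-s_3/2$. Weight $k(\mathbf m)=(m_2+3m_3+2m_4+3m_5+m_6,\ m_1+m_2+2m_3+m_4+m_5)$. Arrays $\left[\begin{smallmatrix}a&b&c&b&d\\&x&y&z&\\&&k&&\end{smallmatrix}\right]$ (entries in $\mathbb Z_{\ge0}$) with operators: $e_1$: $(a,c,d;y;k)\mapsto(a-1,c+1,d-1;y+1;k+1)$, zero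 if $\min\{a,d\}=0$; $e_2$: $(b,c;x,z;k)\mapsto(b-1,c+3;x+1,z+1;k+1)$, zero if $b=0$; $f_1$: $(a,c,d;y;k)\mapsto(a+1,c-1,d+1;y-1;k-1)$, zero if $\min\{c,y,k\}=0$; $f_2$: $(b,c;x,z;k)\mapsto(b+1,c-3;x-1,z-1;k-1)$, zero if $\min\{x,z,k\}=0$ or $c<3$ (unlisted entries unchanged; both copies of $b$ change together). $A(\mathbf m)=\left[\begin{smallmatrix}m_2&m_5&m_4&m_5&m_6\\&s_2+1&s_6+1&s_5+1&\\&&d(\mathbf m)&&\end{smallmatrix}\right]$. On Lusztig data, $f_1(\mathbf m)=(m_1,m_2+1,m_3,m_4-1,m_5,m_6+1)$ and $f_2(\mathbf m)=(m_1,m_2,m_3+1,m_4-3,m_5+1,m_6)$, defined (nonzero) exactly when $f_i(A(\mathbf m))\ne0$, and $e_1(\mathbf m)=(m_1,m_2-1,m_3,m_4+1,m_5,m_6-1)$, $e_2(\mathbf m)=(m_1,m_2,m_3-1,m_4+3,m_5-1,m_6)$ likewise. For an array $A$, $\epsilon_i(A)=\max\{n\ge0:e_i^n(A)\ne0\}$ and $\mathrm{hd}(A)=e_1^{\epsilon_1(A)}e_2^{\epsilon_2(A)}(A)$. On $\mathcal B(\lambda+\rho)_{res}$, $\mathbf m\sim\mathbf n$ iff $k(\mathbf m)=k(\mathbf n)$ and $\mathrm{hd}(A(\mathbf m))=\mathrm{hd}(A(\mathbf n))$; the equivalence class of $\mathbf m$ is its resonance family $RF(\mathbf m)$. The head of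 a resonance family is its unique element $\mathbf n$ with $A(\mathbf n)=\mathrm{hd}(A(\mathbf n))$; it has the form $(n_1,0,0,n_4,0,0)$, $(n_1,n_2,0,n_4,0,0)$ or $(n_1,0,0,n_4,0,n_6)$. *)

From Stdlib Require Import ZArith Arith Lia.
Open Scope Z_scope.

Record Ldat := mkL { m1 : nat; m2 : nat; m3 : nat; m4 : nat; m5 : nat; m6 : nat }.

Section Bounding.
Variables (l1 l2 : nat).
Definition L1 := Z.of_nat l1.
Definition L2 := Z.of_nat l2.
Definition s1 (m : Ldat) : Z :=
  L2 + Z.of_nat (m5 m) + Z.of_nat (m6 m) - Z.of_nat (m1 m) - Z.of_nat (m2 m) - Z.of_nat (m3 m).
Definition s2 (m : Ldat) : Z :=
  L2 + Z.of_nat (m5 m) + Z.of_nat (m6 m) - Z.of_nat (m2 m) - 2 * Z.of_nat (m3 m).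
Definition s3 (m : Ldat) : Z := L2 + Z.of_nat (m6 m) - Z.of_nat (m3 m) - Z.of_nat (m4 m).
Definition s4 (m : Ldat) : Z := L2 + Z.of_nat (m6 m) - Z.of_nat (m4 m) - Z.of_nat (m5 m).
Definition s5 (m : Ldat) : Z := L2 - Z.of_nat (m5 m).
Definition s6 (m : Ldat) : Z := L1 - Z.of_nat (m6 m).

Definition inB (m : Ldat) : Prop :=
  -1 <= s1 m /\ -1 <= s2 m /\ -1 <= s3 m /\ -1 <= s4 m /\ -1 <= s5 m /\ -1 <= s6 m
  /\ -1 <= 2 * s3 m - s4 m.

Definition inBres (m : Ldat) : Prop :=
  m3 m = m5 m /\ -1 <= s1 m /\ -1 <= s2 m /\ -1 <= s5 m /\ -1 <= s6 m
  /\ s3 m = s4 m /\ s3 m <= 0 /\ Z.Even (s3 m).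

(* decoration d(m) = -s3/2 (a nonnegative integer on B_res) *)
Definition deco (m : Ldat) : Z := - (s3 m / 2).
End Bounding.

Definition wt (m : Ldat) : nat * nat :=
  ((m2 m + 3 * m3 m + 2 * m4 m + 3 * m5 m + m6 m)%nat,
   (m1 m + m2 m + 2 * m3 m + m4 m + m5 m)%nat).

(* Arrays [a b c b d ; x y z ; k] with entries in Z_{>=0} (b stored once) *)
Record Arr := mkA { aa : nat; ab : nat; ac : nat; ad : nat;
                    ax : nat; ay : nat; az : nat; ak : nat }.

(* operators on arrays; None stands for 0 *)
Definition e1A (A : Arr) : option Arr :=
  if (Nat.eqb (Nat.min (aa A) (ad A)) 0) then None
  else Some (mkA (aa A - 1) (ab A) (ac A + 1) (ad A - 1) (ax A) (ay A + 1) (az A) (ak A + 1)).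
Definition e2A (A : Arr) : option Arr :=
  if Nat.eqb (ab A) 0 then None
  else Some (mkA (aa A) (ab A - 1) (ac A + 3) (ad A) (ax A + 1) (ay A) (az A + 1) (ak A + 1)).
Definition f1A (A : Arr) : option Arr :=
  if Nat.eqb (Nat.min (ac A) (Nat.min (ay A) (ak A))) 0 then None
  else Some (mkA (aa A + 1) (ab A) (ac A - 1) (ad A + 1) (ax A) (ay A - 1) (az A) (ak A - 1)).
Definition f2A (A : Arr) : option Arr :=
  if orb (Nat.eqb (Nat.min (ax A) (Nat.min (az A) (ak A))) 0) (Nat.ltb (ac A) 3) then None
  else Some (mkA (aa A) (ab A + 1) (ac A - 3) (ad A) (ax A - 1) (ay A) (az A - 1) (ak A - 1)).

Fixpoint iterO {T : Type} (f : T -> option T) (n : nat) (x : T) : option T :=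
  match n with
  | O => Some x
  | S n' => match iterO f n' x with Some y => f y | None => None end
  end.

(* A(m); entries s_j+1 and d(m) are nonnegative on B_res *)
Definition Aof (l1 l2 : nat) (m : Ldat) : Arr :=
  mkA (m2 m) (m5 m) (m4 m) (m6 m)
      (Z.to_nat (s2 l2 m + 1)) (Z.to_nat (s6 l1 m + 1)) (Z.to_nat (s5 l2 m + 1))
      (Z.to_nat (deco l2 m)).

Definition f1L (l1 l2 : nat) (m : Ldat) : option Ldat :=
  match f1A (Aof l1 l2 m) with
  | Some _ => Some (mkL (m1 m) (m2 m + 1) (m3 m) (m4 m - 1) (m5 m) (m6 m + 1))
  | None => None end.
Definition f2L (l1 l2 : nat) (m : Ldat) : option Ldat :=
  match f2A (Aof l1 l2 m) with
  | Some _ => Some (mkL (m1 m) (m2 m) (m3 m + 1) (m4 m - 3) (m5 m + 1) (m6 m))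
  | None => None end.

Definition is_eps (e : Arr -> option Arr) (A : Arr) (n : nat) : Prop :=
  iterO e n A <> None /\ (forall n', iterO e n' A <> None -> (n' <= n)%nat).

Definition is_hd (A H : Arr) : Prop :=
  exists n1 n2 X, is_eps e1A A n1 /\ is_eps e2A A n2 /\
    iterO e2A n2 A = Some X /\ iterO e1A n1 X = Some H.

Definition res_equiv (l1 l2 : nat) (m n : Ldat) : Prop :=
  wt m = wt n /\ exists H, is_hd (Aof l1 l2 m) H /\ is_hd (Aof l1 l2 n) H.

Definition inRF (l1 l2 : nat) (m n : Ldat) : Prop :=
  inBres l1 l2 n /\ res_equiv l1 l2 m n.

Definition is_head (l1 l2 : nat) (m : Ldat) : Prop :=
  inBres l1 l2 m /\ is_hd (Aof l1 l2 m) (Aof l1 l2 m).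

(* A head m has m3 = m5 = 0 and min (m2, m6) = 0, so its array A(m) has b = 0 and min (a, d) = 0.
   The raising operators act on arrays by explicit shifts, which gives hd in closed form, and
   lowering by f1^i f2^j shifts back; as long as no entry of the array is exhausted, the array
   of f1^i f2^j m is that shift of A(m) and its head is A(m) again.  Hence RF(m) is exactly the
   set of these lowerings with i + 3j <= m4, i + j <= d(m), i <= s6 + 1 and j <= min (s2, s5) + 1.
   The lowering with i + j = d(m) has s3 = s4 = 0 and lies in B(λ+ρ); excluding it forces
   i + j < d(m), and since m4 = λ2 + m6 + 2 d(m) the constraints on m4 and d(m) then follow from
   the box constraints on i and j by induction over the box. *)

From Stdlib Require Import ZArith Lia Bool.
Open Scope Z_scope.

Section Arrays.
Local Open Scope nat_scope.

Lemma iterO_downward_closed {T : Type} (f : T -> option T) (P : nat -> bool) (x : nat -> T) :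
  (forall n, P (S n) = true -> P n = true) ->
  (forall n, P n = true -> f (x n) = if P (S n) then Some (x (S n)) else None) ->
  P 0 = true ->
  forall n, iterO f n (x 0) = if P n then Some (x n) else None.
Proof.
  intros Hdown Hstep H0 n. induction n as [|n IH]; cbn [iterO].
  - rewrite H0. reflexivity.
  - rewrite IH. destruct (P n) eqn:Hn; [apply Hstep, Hn|].
    destruct (P (S n)) eqn:HSn; [|reflexivity].
    rewrite (Hdown n HSn) in Hn. discriminate.
Qed.

Lemma iterO_e1A (n : nat) (A : Arr) :
  iterO e1A n A =
  if n <=? Nat.min (aa A) (ad A)
  then Some (mkA (aa A - n) (ab A) (ac A + n) (ad A - n) (ax A) (ay A + n) (az A) (ak A + n))
  else None.
Proof.
  induction n as [|n IH]; cbn [iterO].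
  - destruct A; cbn; f_equal; f_equal; lia.
  - rewrite IH. destruct (Nat.leb_spec n (Nat.min (aa A) (ad A))).
    + unfold e1A; cbn [aa ab ac ad ax ay az ak].
      destruct (Nat.eqb_spec (Nat.min (aa A - n) (ad A - n)) 0);
        destruct (Nat.leb_spec (S n) (Nat.min (aa A) (ad A))); try lia; try reflexivity.
      f_equal; f_equal; lia.
    + destruct (Nat.leb_spec (S n) (Nat.min (aa A) (ad A))); [lia | reflexivity].
Qed.

Lemma iterO_e2A (n : nat) (A : Arr) :
  iterO e2A n A =
  if n <=? ab A
  then Some (mkA (aa A) (ab A - n) (ac A + 3 * n) (ad A) (ax A + n) (ay A) (az A + n) (ak A + n))
  else None.
Proof.
  induction n as [|n IH]; cbn [iterO].
  - destruct A; cbn; f_equal; f_equal; lia.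
  - rewrite IH. destruct (Nat.leb_spec n (ab A)).
    + unfold e2A; cbn [aa ab ac ad ax ay az ak].
      destruct (Nat.eqb_spec (ab A - n) 0);
        destruct (Nat.leb_spec (S n) (ab A)); try lia; try reflexivity.
      f_equal; f_equal; lia.
    + destruct (Nat.leb_spec (S n) (ab A)); [lia | reflexivity].
Qed.

Definition hd_arr (A : Arr) : Arr :=
  mkA (aa A - Nat.min (aa A) (ad A)) 0 (ac A + 3 * ab A + Nat.min (aa A) (ad A))
      (ad A - Nat.min (aa A) (ad A)) (ax A + ab A) (ay A + Nat.min (aa A) (ad A))
      (az A + ab A) (ak A + Nat.min (aa A) (ad A) + ab A).

Lemma is_eps_unique (e : Arr -> option Arr) (A : Arr) (n n' : nat) :
  is_eps e A n -> is_eps e A n' -> n = n'.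
Proof. intros [Hn Hmax] [Hn' Hmax']. apply Nat.le_antisymm; auto. Qed.

Lemma is_eps_e1A (A : Arr) : is_eps e1A A (Nat.min (aa A) (ad A)).
Proof.
  split.
  - rewrite iterO_e1A, Nat.leb_refl. discriminate.
  - intros n. rewrite iterO_e1A.
    destruct (Nat.leb_spec n (Nat.min (aa A) (ad A))) as [Hle|_]; [auto | congruence].
Qed.

Lemma is_eps_e2A (A : Arr) : is_eps e2A A (ab A).
Proof.
  split.
  - rewrite iterO_e2A, Nat.leb_refl. discriminate.
  - intros n. rewrite iterO_e2A.
    destruct (Nat.leb_spec n (ab A)) as [Hle|_]; [auto | congruence].
Qed.

Lemma is_hd_iff (A H : Arr) : is_hd A H <-> H = hd_arr A.
Proof.
  split.
  - intros (n1 & n2 & X & E1 & E2 & EX & EH).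
    rewrite (is_eps_unique _ _ _ _ E2 (is_eps_e2A A)), iterO_e2A, Nat.leb_refl in EX.
    injection EX as <-.
    rewrite (is_eps_unique _ _ _ _ E1 (is_eps_e1A A)), iterO_e1A in EH.
    cbn [aa ad] in EH. rewrite Nat.leb_refl in EH. injection EH as <-.
    unfold hd_arr; cbn; f_equal; lia.
  - intros ->. do 3 eexists.
    split; [apply is_eps_e1A|]. split; [apply is_eps_e2A|].
    rewrite iterO_e2A, Nat.leb_refl. split; [reflexivity|].
    rewrite iterO_e1A; cbn [aa ad]. rewrite Nat.leb_refl.
    unfold hd_arr; cbn [aa ab ac ad ax ay az ak]; f_equal; f_equal; lia.
Qed.

(* [lowerA A i j] is the array of f1^i f2^j; [lowerable A i j] says that none of its
   truncated subtractions has hit 0. *)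
Definition lowerA (A : Arr) (i j : nat) : Arr :=
  mkA (aa A + i) (ab A + j) (ac A - (i + 3 * j)) (ad A + i)
      (ax A - j) (ay A - i) (az A - j) (ak A - (i + j)).

Definition lowerable (A : Arr) (i j : nat) : bool :=
  (i + 3 * j <=? ac A) && (i + j <=? ak A) && (i <=? ay A) && (j <=? ax A) && (j <=? az A).

Lemma lowerable_spec (A : Arr) (i j : nat) :
  lowerable A i j = true <->
  (i + 3 * j <= ac A /\ i + j <= ak A /\ i <= ay A /\ j <= ax A /\ j <= az A).
Proof. unfold lowerable. rewrite !andb_true_iff, !Nat.leb_le. tauto. Qed.

Lemma lowerable_mono (A : Arr) (i j i' j' : nat) :
  (i' <= i) -> (j' <= j) -> lowerable A i j = true -> lowerable A i' j' = true.
Proof. rewrite !lowerable_spec. lia. Qed.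

Lemma f1A_lowerA (A : Arr) (i j : nat) : lowerable A i j = true ->
  f1A (lowerA A i j) = if lowerable A (S i) j then Some (lowerA A (S i) j) else None.
Proof.
  rewrite lowerable_spec. intros Hij. unfold f1A, lowerA; cbn [aa ab ac ad ax ay az ak].
  destruct (lowerable A (S i) j) eqn:E.
  - apply lowerable_spec in E.
    destruct (Nat.eqb _ 0) eqn:Hz; [apply Nat.eqb_eq in Hz; lia|].
    f_equal; f_equal; lia.
  - rewrite <- not_true_iff_false, lowerable_spec in E.
    destruct (Nat.eqb _ 0) eqn:Hz; [reflexivity|].
    apply Nat.eqb_neq in Hz. exfalso. apply E. lia.
Qed.

Lemma f2A_lowerA (A : Arr) (i j : nat) : lowerable A i j = true ->
  f2A (lowerA A i j) = if lowerable A i (S j) then Some (lowerA A i (S j)) else None.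
Proof.
  rewrite lowerable_spec. intros Hij. unfold f2A, lowerA; cbn [aa ab ac ad ax ay az ak].
  destruct (lowerable A i (S j)) eqn:E.
  - apply lowerable_spec in E.
    destruct (orb _ _) eqn:Hz; [rewrite orb_true_iff, Nat.eqb_eq, Nat.ltb_lt in Hz; lia|].
    f_equal; f_equal; lia.
  - rewrite <- not_true_iff_false, lowerable_spec in E.
    destruct (orb _ _) eqn:Hz; [reflexivity|].
    rewrite orb_false_iff, Nat.eqb_neq, Nat.ltb_ge in Hz. exfalso. apply E. lia.
Qed.

Lemma hd_arr_lowerA (A : Arr) (i j : nat) :
  ab A = 0 -> Nat.min (aa A) (ad A) = 0 -> lowerable A i j = true ->
  hd_arr (lowerA A i j) = A.
Proof.
  rewrite lowerable_spec. intros Hb Hmin Hij.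
  destruct A; cbn in *. unfold hd_arr, lowerA; cbn. f_equal; lia.
Qed.

End Arrays.

Lemma res_equiv_iff (l1 l2 : nat) (m n : Ldat) :
  res_equiv l1 l2 m n <-> wt m = wt n /\ hd_arr (Aof l1 l2 m) = hd_arr (Aof l1 l2 n).
Proof.
  unfold res_equiv. split.
  - intros [Hw (H & Hm & Hn)]. rewrite is_hd_iff in Hm, Hn. split; congruence.
  - intros [Hw Hh]. split; [exact Hw|]. exists (hd_arr (Aof l1 l2 m)).
    rewrite !is_hd_iff. auto.
Qed.

Definition lowered (m : Ldat) (i j : nat) : Ldat :=
  mkL (m1 m) (m2 m + i) (m3 m + j) (m4 m - (i + 3 * j)) (m5 m + j) (m6 m + i).

Lemma lowered_0_0 (m : Ldat) : lowered m 0 0 = m.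
Proof. destruct m; unfold lowered; cbn; f_equal; lia. Qed.

Lemma wt_lowered (m : Ldat) (i j : nat) : (i + 3 * j <= m4 m)%nat -> wt (lowered m i j) = wt m.
Proof. intros Hij. unfold wt, lowered; cbn. f_equal; lia. Qed.

Lemma s3_lowered (l2 : nat) (m : Ldat) (i j : nat) : (i + 3 * j <= m4 m)%nat ->
  s3 l2 (lowered m i j) = s3 l2 m + Z.of_nat (i + j) * 2.
Proof. intros Hij. unfold s3, lowered; cbn. lia. Qed.

Lemma deco_lowered (l2 : nat) (m : Ldat) (i j : nat) : (i + 3 * j <= m4 m)%nat ->
  deco l2 (lowered m i j) = deco l2 m - Z.of_nat i - Z.of_nat j.
Proof.
  intros Hij. unfold deco. rewrite s3_lowered, Z.div_add by (assumption || discriminate). lia.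
Qed.

Lemma Aof_lowered (l1 l2 : nat) (m : Ldat) (i j : nat) :
  lowerable (Aof l1 l2 m) i j = true -> Aof l1 l2 (lowered m i j) = lowerA (Aof l1 l2 m) i j.
Proof.
  rewrite lowerable_spec. intros Hij. unfold Aof at 1.
  rewrite deco_lowered by exact (proj1 Hij).
  unfold Aof, lowerA, lowered, s2, s5, s6, L1, L2 in *;
    cbn [aa ab ac ad ax ay az ak m1 m2 m3 m4 m5 m6] in *.
  f_equal; lia.
Qed.

Lemma f1L_lowered (l1 l2 : nat) (m : Ldat) (i j : nat) :
  lowerable (Aof l1 l2 m) i j = true ->
  f1L l1 l2 (lowered m i j) =
  if lowerable (Aof l1 l2 m) (S i) j then Some (lowered m (S i) j) else None.
Proof.
  intros Hij. unfold f1L. rewrite Aof_lowered, f1A_lowerA by exact Hij.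
  destruct (lowerable _ (S i) j); [|reflexivity].
  unfold lowered; cbn. f_equal; f_equal; lia.
Qed.

Lemma f2L_lowered (l1 l2 : nat) (m : Ldat) (i j : nat) :
  lowerable (Aof l1 l2 m) i j = true ->
  f2L l1 l2 (lowered m i j) =
  if lowerable (Aof l1 l2 m) i (S j) then Some (lowered m i (S j)) else None.
Proof.
  intros Hij. unfold f2L. rewrite Aof_lowered, f2A_lowerA by exact Hij.
  destruct (lowerable _ i (S j)); [|reflexivity].
  unfold lowered; cbn. f_equal; f_equal; lia.
Qed.

Lemma iterO_f2L (l1 l2 : nat) (m : Ldat) (j : nat) :
  iterO (f2L l1 l2) j m =
  if lowerable (Aof l1 l2 m) 0 j then Some (lowered m 0 j) else None.
Proof.
  rewrite <- (lowered_0_0 m) at 1.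
  apply (iterO_downward_closed _ (lowerable (Aof l1 l2 m) 0) (lowered m 0)).
  - intros n. apply lowerable_mono; lia.
  - intros n. apply f2L_lowered.
  - apply lowerable_spec. lia.
Qed.

Lemma iterO_f1L (l1 l2 : nat) (m : Ldat) (i j : nat) :
  lowerable (Aof l1 l2 m) 0 j = true ->
  iterO (f1L l1 l2) i (lowered m 0 j) =
  if lowerable (Aof l1 l2 m) i j then Some (lowered m i j) else None.
Proof.
  intros H0.
  apply (iterO_downward_closed _ (fun n => lowerable (Aof l1 l2 m) n j) (fun n => lowered m n j)).
  - intros n. apply lowerable_mono; lia.
  - intros n. apply f1L_lowered.
  - exact H0.
Qed.

Lemma iterO_lowered (l1 l2 : nat) (m : Ldat) (i j : nat) :
  lowerable (Aof l1 l2 m) i j = true ->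
  iterO (f2L l1 l2) j m = Some (lowered m 0 j) /\
  iterO (f1L l1 l2) i (lowered m 0 j) = Some (lowered m i j).
Proof.
  intros Hij.
  assert (H0 : lowerable (Aof l1 l2 m) 0 j = true) by (revert Hij; apply lowerable_mono; lia).
  rewrite iterO_f2L, iterO_f1L, H0, Hij by exact H0. auto.
Qed.

Lemma iterO_lowered_inv (l1 l2 : nat) (m y n : Ldat) (i j : nat) :
  iterO (f2L l1 l2) j m = Some y -> iterO (f1L l1 l2) i y = Some n ->
  lowerable (Aof l1 l2 m) i j = true /\ n = lowered m i j.
Proof.
  rewrite iterO_f2L. destruct (lowerable _ 0 j) eqn:H0; [|discriminate].
  intros Hy; injection Hy as <-. rewrite iterO_f1L by exact H0.
  destruct (lowerable _ i j); [|discriminate]. intros Hn; injection Hn as <-. auto.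
Qed.

Lemma s3_of_even (l2 : nat) (n : Ldat) : Z.Even (s3 l2 n) -> s3 l2 n = -2 * deco l2 n.
Proof.
  intros [q Hq]. unfold deco. rewrite Hq, (Z.mul_comm 2 q), Z.div_mul by discriminate. lia.
Qed.

Ltac unfold_bounds :=
  unfold inB, inBres, Aof, lowered, s1, s2, s3, s4, s5, s6, L1, L2 in *;
  cbn [aa ab ac ad ax ay az ak m1 m2 m3 m4 m5 m6] in *.

Section Head.
Variables (l1 l2 : nat) (m : Ldat).
Hypothesis head_m : is_head l1 l2 m.

Local Notation A := (Aof l1 l2 m).

Lemma hd_arr_head : hd_arr A = A.
Proof. symmetry. apply is_hd_iff, head_m. Qed.

Lemma head_shape : m3 m = 0%nat /\ m5 m = 0%nat /\ Nat.min (m2 m) (m6 m) = 0%nat.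
Proof.
  pose proof (f_equal ak hd_arr_head) as Hk. destruct head_m as [[H35 _] _].
  unfold hd_arr, Aof in Hk; cbn [aa ab ad ak] in Hk. lia.
Qed.

Lemma head_s3 : s3 l2 m = -2 * deco l2 m.
Proof. apply s3_of_even, head_m. Qed.

Lemma ac_head : ac A = (l2 + ad A + 2 * ak A)%nat.
Proof.
  pose proof head_s3. pose proof head_shape. destruct head_m as [Hres _].
  unfold_bounds. lia.
Qed.

Lemma az_head : az A = S l2.
Proof. pose proof head_shape. unfold_bounds. lia. Qed.

Lemma ay_head : (ay A + ad A = S l1)%nat.
Proof. destruct head_m as [Hres _]. unfold_bounds. lia. Qed.

Lemma inBres_lowered (i j : nat) : lowerable A i j = true -> inBres l1 l2 (lowered m i j).
Proof.
  rewrite lowerable_spec. intros Hij.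
  assert (Hs3 : s3 l2 (lowered m i j) = 2 * (Z.of_nat (i + j) - deco l2 m)).
  { rewrite s3_lowered, head_s3 by exact (proj1 Hij). lia. }
  assert (Heven : Z.Even (s3 l2 (lowered m i j))) by (eexists; exact Hs3).
  pose proof head_shape. destruct head_m as [Hres _].
  revert Hs3 Heven. unfold_bounds. intros Hs3 Heven.
  repeat split; [lia .. | exact Heven].
Qed.

Lemma inB_lowered (i j : nat) :
  lowerable A i j = true -> (i + j)%nat = ak A -> inB l1 l2 (lowered m i j).
Proof.
  rewrite lowerable_spec. intros Hij Hk.
  assert (Hs3 : s3 l2 (lowered m i j) = 2 * (Z.of_nat (i + j) - deco l2 m)).
  { rewrite s3_lowered, head_s3 by exact (proj1 Hij). lia. }
  pose proof head_s3. pose proof head_shape. destruct head_m as [Hres _].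
  revert Hs3. unfold_bounds. lia.
Qed.

Lemma inRF_lowered (i j : nat) : lowerable A i j = true -> inRF l1 l2 m (lowered m i j).
Proof.
  intros Hij. split; [apply inBres_lowered, Hij|]. apply res_equiv_iff. split.
  - symmetry. apply wt_lowered. apply lowerable_spec in Hij. apply Hij.
  - destruct head_shape as (_ & H5 & Hmin).
    rewrite hd_arr_head, Aof_lowered, hd_arr_lowerA by assumption. reflexivity.
Qed.

Lemma inRF_iff_lowered (n : Ldat) :
  inRF l1 l2 m n <-> exists i j, lowerable A i j = true /\ n = lowered m i j.
Proof.
  split.
  - intros [[Hn35 _] Heq]. apply res_equiv_iff in Heq as [Hw Hh].
    rewrite hd_arr_head in Hh. set (B := Aof l1 l2 n) in Hh.
    exists (Nat.min (aa B) (ad B)), (ab B).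
    assert (Hl : lowerable A (Nat.min (aa B) (ad B)) (ab B) = true).
    { apply lowerable_spec. rewrite Hh. unfold hd_arr; cbn [ac ak ay ax az]. lia. }
    split; [exact Hl|].
    apply lowerable_spec, proj1 in Hl.
    pose proof (f_equal aa Hh) as Ea. pose proof (f_equal ad Hh) as Ed.
    pose proof (f_equal ac Hh) as Ec. clear Hh.
    destruct head_shape as (H3 & H5 & Hmin).
    unfold wt in Hw. injection Hw as W1 W2.
    subst B; unfold hd_arr, Aof in *; cbn [aa ab ac ad] in *.
    destruct n as [n1 n2 n3 n4 n5 n6]; unfold lowered; cbn [m1 m2 m3 m4 m5 m6] in *.
    f_equal; lia.
  - intros (i & j & Hij & ->). apply inRF_lowered, Hij.
Qed.

Lemma bounds_iff (t1 t2 : nat) :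
  (Z.of_nat t1 <= s6 l1 m + 1 /\ Z.of_nat t2 <= Z.min (s2 l2 m) (s5 l2 m) + 1) <->
  (t1 <= ay A /\ t2 <= ax A /\ t2 <= az A)%nat.
Proof. destruct head_m as [Hres _]. unfold_bounds. lia. Qed.

Section DisjointFromB.
Hypothesis RF_disjoint_B : forall n, inRF l1 l2 m n -> ~ inB l1 l2 n.

Lemma lowerable_lt_ak (i j : nat) : lowerable A i j = true -> (i + j < ak A)%nat.
Proof.
  intros Hij. pose proof Hij as Hb. apply lowerable_spec in Hb.
  destruct (Nat.eq_dec (i + j) (ak A)) as [Hk|]; [|lia].
  exfalso. apply (RF_disjoint_B (lowered m i j)).
  - apply inRF_lowered, Hij.
  - apply inB_lowered; assumption.
Qed.

Lemma lowerable_succ_i (i j : nat) :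
  lowerable A i j = true -> (S i <= ay A)%nat -> lowerable A (S i) j = true.
Proof.
  intros Hij Hi. pose proof (lowerable_lt_ak i j Hij). pose proof ac_head. pose proof az_head.
  rewrite lowerable_spec in *. lia.
Qed.

Lemma lowerable_column (j : nat) :
  (j <= ax A)%nat -> (j <= az A)%nat -> lowerable A 0 j = true.
Proof.
  induction j as [|j IH]; intros Hx Hz; [apply lowerable_spec; lia|].
  assert (H0 : lowerable A 0 j = true) by (apply IH; lia).
  pose proof (lowerable_lt_ak 0 j H0). pose proof ac_head. pose proof az_head. pose proof ay_head.
  assert (Hc : (3 * S j <= ac A)%nat).
  { destruct (le_lt_dec (S (S j)) (ak A)); [lia|].
    destruct (le_lt_dec (S j) (l2 + ad A)); [lia|].
    (* the remaining case is d(m) = j + 1, m6 = 0, j = λ2: then (1, j) is lowerable and reaches d(m) *)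
    pose proof (lowerable_lt_ak 1 j (lowerable_succ_i 0 j H0 ltac:(lia))). lia. }
  apply lowerable_spec. apply lowerable_spec in H0. lia.
Qed.

Lemma lowerable_iff_bounds (t1 t2 : nat) :
  lowerable A t1 t2 = true <->
  Z.of_nat t1 <= s6 l1 m + 1 /\ Z.of_nat t2 <= Z.min (s2 l2 m) (s5 l2 m) + 1.
Proof.
  rewrite bounds_iff. split; [rewrite lowerable_spec; lia|].
  intros (Hi & Hx & Hz). induction t1 as [|t1 IH].
  - apply lowerable_column; assumption.
  - apply lowerable_succ_i; [apply IH|]; lia.
Qed.

End DisjointFromB.
End Head.

Theorem mainTheorem8 (l1 l2 : nat) (m : Ldat) :
  is_head l1 l2 m ->
  (forall n, inRF l1 l2 m n -> ~ inB l1 l2 n) ->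
  (forall t1 t2 : nat,
      Z.of_nat t1 <= s6 l1 m + 1 ->
      Z.of_nat t2 <= Z.min (s2 l2 m) (s5 l2 m) + 1 ->
      match iterO (f2L l1 l2) t2 m with
      | Some y => iterO (f1L l1 l2) t1 y <> None
      | None => False
      end) /\
  (forall n, inRF l1 l2 m n <->
     exists (t1 t2 : nat) (y : Ldat),
       Z.of_nat t1 <= s6 l1 m + 1 /\
       Z.of_nat t2 <= Z.min (s2 l2 m) (s5 l2 m) + 1 /\
       iterO (f2L l1 l2) t2 m = Some y /\
       iterO (f1L l1 l2) t1 y = Some n).
Proof.
  intros Hhead Hdisj.
  pose proof (lowerable_iff_bounds l1 l2 m Hhead Hdisj) as Hbox.
  split.
  - intros t1 t2 H1 H2.
    destruct (iterO_lowered l1 l2 m t1 t2 (proj2 (Hbox t1 t2) (conj H1 H2))) as [-> ->].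
    discriminate.
  - intros n. rewrite inRF_iff_lowered by exact Hhead. split.
    + intros (i & j & Hij & ->). destruct (iterO_lowered l1 l2 m i j Hij) as [Hf2 Hf1].
      apply Hbox in Hij as [Hi Hj]. exists i, j, (lowered m 0 j). auto.
    + intros (i & j & y & _ & _ & Hy & Hn).
      destruct (iterO_lowered_inv l1 l2 m y n i j Hy Hn) as [Hij ->]. eauto.
Qed.
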